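(* Let $S_{\rm tr}, S_1,\dots,S_m$ be the output of Algorithm 2 (defined in the context) and set $\gamma := \sum_{i=1}^m f_i(S_i)$. If every $f_i$ is monotone and submodular, then $$\sum_{i=1}^m f_i(S_{\rm tr}\cup S_i)\;\ge\;\max\Bigl\{\gamma,\;(1-1/e)(\mathrm{OPT}-2\gamma)+\gamma\Bigr\}.$$ Consequently $\sum_{i=1}^m f_i(S_{\rm tr}\cup S_i)\ge \tfrac12\,\mathrm{OPT}$ for every value of $\gamma$.
   Context: $V$ is a finite ground set with $|V|=n$; $k,l$ are integers with $1\le l<k\le n$. For $i=1,\dots,m$, $f_i:2^V\to\mathbb{R}_{\ge 0}$ is a set function; $f_i$ is monotone if $A\subseteq B\Rightarrow f_i(A)\le f_i(B)$ and submodular if $f_i(A)+f_i(B)\ge f_i(A\cup B)+f_i(A\cap B)$ for all $A,B\subseteq V$. Write $\Delta_i(e\mid S)=f_i(S\cup\{e\})-f_i(S)$. Define $$\mathrm{OPT}=\max_{S_{\rm tr}\subseteq V,\,|S_{\rm tr}|\le l}\;\sum_{i=1}^m\;\max_{S_i\subseteq V,\,|S_i|\le k-l} f_i(S_{\rm tr}\cup S_i).$$ Algorithm 2: start with $S_{\rm tr}=S_1=\dots=S_m=\emptyset$. Phase 1: for each $i=1,\dots,m$ and $t=1,\dots,k-l$, choose $e_i^*\in\arg\max_{e\in V\setminus S_i}\Delta_i(e\mid S_i)$ and set $S_i\leftarrow S_i\cup\{e_i^*\}$. Phase 2: for $t=1,\dots,l$, choose $e^*\in\arg\max_{e\in V\setminus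 S_{\rm tr}}\sum_{i=1}^m\Delta_i(e\mid S_{\rm tr}\cup S_i)$ and set $S_{\rm tr}\leftarrow S_{\rm tr}\cup\{e^*\}$. Output $S_{\rm tr},S_1,\dots,S_m$. Ties in all argmax's are broken arbitrarily. *)

From mathcomp Require Import all_boot all_order all_algebra.
From mathcomp Require Import reals sequences.
Set Implicit Arguments. Unset Strict Implicit. Unset Printing Implicit Defensive.
Import Order.TTheory GRing.Theory Num.Theory.
Local Open Scope ring_scope.

Section Defs.
Variables (R : realType) (V : finType).

Definition monotone_fn (f : {set V} -> R) : Prop :=
  forall A B : {set V}, A \subset B -> f A <= f B.

Definition submodular_fn (f : {set V} -> R) : Prop :=
  forall A B : {set V}, f (A :|: B) + f (A :&: B) <= f A + f B.

Definition gain (f : {set V} -> R) (e : V) (S : {set V}) : R := f (e |: S) - f S.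

Definition greedy_step (g : {set V} -> R) (A B : {set V}) : Prop :=
  exists2 e, e \notin A &
    B = e |: A /\ (forall x, x \notin A -> gain g x A <= gain g e A).

Definition greedy_output (g : {set V} -> R) (T : nat) (S : {set V}) : Prop :=
  exists A : nat -> {set V},
    [/\ A 0%N = set0, (forall t, (t < T)%N -> greedy_step g (A t) (A t.+1)) & A T = S].

(* Maxima over nonempty finite families of nonnegative reals, computed with
   Num.max and neutral element 0 (harmless since f_i >= 0 and the empty set
   is always admissible). *)
Definition OPT (m : nat) (f : 'I_m -> {set V} -> R) (k l : nat) : R :=
  \big[Num.max/0]_(Str : {set V} | (#|Str| <= l)%N)
    \sum_(i < m) \big[Num.max/0]_(Si : {set V} | (#|Si| <= k - l)%N) f i (Str :|: Si).

End Defs.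

From mathcomp Require Import all_boot all_order all_algebra.
From mathcomp Require Import reals sequences exp lra zify.
Set Implicit Arguments. Unset Strict Implicit. Unset Printing Implicit Defensive.
Import Order.TTheory GRing.Theory Num.Theory.
Local Open Scope ring_scope.

(* For a monotone submodular h, a greedy step A -> B adds an element of
   maximal marginal gain; by diminishing returns, adding any set X to a
   superset C of A gains at most #|X| times that greedy gain
   ([greedy_step_union_bound]).  For a greedy run of T >= 1 steps with
   output S this gives two classical facts:
   - [greedy_output_augment] (phase 1): if h >= 0 and #|Y| <= T, then
     h (X :|: Y) <= h (X :|: S) + h S, by summing the T telescoping gains;
   - [greedy_output_approx] (phase 2): if #|X| <= T, then
     (1 - 1/e) (h X - h set0) <= h S - h set0, since the gap to h X shrinks
     by a factor 1 - 1/T per step and (1 - 1/T)^T <= 1/e.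
   Phase 2 is greedy on g X = \sum_i f_i (X :|: S_i), monotone submodular by
   closure lemmas, with g set0 = gamma and g Str = val.  By phase 1 the
   summand of OPT at a shared set X is at most g X + gamma, and by phase 2
   g X <= gamma + (val - gamma) / (1 - 1/e) ([OPT_le] collects these bounds),
   whence (1 - 1/e) (OPT - 2 gamma) + gamma <= val.  The bound OPT / 2 follows
   from 1 - 1/e >= 1/2 ([max_guarantee_ge_half]). *)

Lemma contraction_pow_le (R : realType) (T : nat) : (0 < T)%N ->
  (1 - (T%:R : R)^-1) ^+ T <= (expR 1)^-1.
Proof.
move=> T0; have Tpos : 0 < (T%:R : R) by rewrite ltr0n.
have q0 : 0 <= 1 - (T%:R : R)^-1 by rewrite subr_ge0 invf_le1 // ler1n.
apply: le_trans (lerXn2r T _ _ (expR_ge1Dx (- (T%:R : R)^-1))) _.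
- by rewrite nnegrE.
- by rewrite nnegrE expR_ge0.
by rewrite -expRM_natl mulrN mulfV ?lt0r_neq0 // expRN.
Qed.

Lemma half_le_one_minus_inv_e (R : realType) : 1 / 2 <= 1 - (expR 1)^-1 :> R.
Proof.
have e2 : 2 <= expR 1 :> R by have := expR_ge1Dx (1 : R); lra.
have : (expR 1)^-1 <= 2^-1 :> R by rewrite lef_pV2 ?posrE ?expR_gt0.
lra.
Qed.

Lemma max_guarantee_ge_half (R : realFieldType) (c g o : R) :
  1 / 2 <= c -> o / 2 <= Num.max g (c * (o - 2 * g) + g).
Proof.
move=> c_ge; rewrite le_max; have [o_le | o_gt] := lerP o (2 * g).
  by apply/orP; left; lra.
apply/orP; right; have : 0 <= (c - 1 / 2) * (o - 2 * g) by apply: mulr_ge0; lra.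
rewrite mulrBl; lra.
Qed.

Section MonotoneSubmodular.
Variables (R : realType) (V : finType) (h : {set V} -> R).
Hypotheses (h_mono : monotone_fn h) (h_sub : submodular_fn h).

Lemma gain_ge0 e (A : {set V}) : 0 <= gain h e A.
Proof. by rewrite /gain subr_ge0; apply: h_mono; apply: subsetUr. Qed.

Lemma gain_antitone e (A B : {set V}) : A \subset B -> gain h e B <= gain h e A.
Proof.
move=> AB; have := h_sub (e |: A) B.
have -> : (e |: A) :|: B = e |: B by rewrite -setUA (setUidPr AB).
have : h A <= h ((e |: A) :&: B) by apply: h_mono; rewrite subsetI subsetUr AB.
rewrite /gain; lra.
Qed.

Lemma gain_mem e (A : {set V}) : e \in A -> gain h e A = 0.
Proof. by move=> eA; rewrite /gain (setUidPr _) ?subrr // sub1set. Qed.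

Lemma union_le_sum_gain (s : seq V) (A : {set V}) :
  h (A :|: [set:: s]) <= h A + \sum_(e <- s) gain h e A.
Proof.
elim: s => [|e s IH]; first by rewrite set_nil setU0 big_nil addr0.
rewrite set_cons setUCA big_cons.
have := gain_antitone e (subsetUl A [set:: s]); rewrite /gain in IH *; lra.
Qed.

Lemma union_le_card_gain (X A : {set V}) c :
  (forall e, e \in X -> gain h e A <= c) -> h (A :|: X) <= h A + c *+ #|X|.
Proof.
move=> gain_le; have := union_le_sum_gain (enum X) A.
rewrite set_enum big_enum /= => /le_trans; apply.
by rewrite lerD2l -sumr_const; apply: ler_sum.
Qed.

Lemma greedy_step_union_bound (A B C : {set V}) :
  greedy_step h A B -> A \subset C ->
  forall X, h (C :|: X) <= h C + (h B - h A) *+ #|X|.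
Proof.
case=> e eA [-> e_max] AC X; apply: union_le_card_gain => x _.
have [xC | xC] := boolP (x \in C).
  by rewrite gain_mem //; apply: gain_ge0.
apply: le_trans (gain_antitone x AC) (e_max x _).
by apply: contra xC; apply: (subsetP AC).
Qed.

Section GreedyRun.
Variables (T : nat) (A : nat -> {set V}).
Hypotheses (A0 : A 0 = set0)
  (A_step : forall t, (t < T)%N -> greedy_step h (A t) (A t.+1)).

Lemma greedy_run_sub t : (t <= T)%N -> A t \subset A T.
Proof.
have from_end d : (d <= T)%N -> A (T - d) \subset A T.
  elim: d => [|d IH] dT; first by rewrite subn0.
  have lt_end : (T - d.+1 < T)%N by lia.
  have [e _ [A_next _]] := A_step lt_end.
  apply: subset_trans (IH (ltnW dT)).
  have -> : (T - d = (T - d.+1).+1)%N by lia.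
  by rewrite A_next subsetUr.
by move=> tT; have := from_end (T - t)%N (leq_subr _ _); rewrite subKn.
Qed.

Lemma greedy_gain_ge0 t : (t < T)%N -> 0 <= h (A t.+1) - h (A t).
Proof. by move=> tT; have [e _ [-> _]] := A_step tT; apply: gain_ge0. Qed.

(* Phase-1 bound: every greedy gain is at least 1/T of what X adds to C, so
   summing the T (telescoping) gains dominates that addition. *)
Lemma greedy_run_union_gain (C X : {set V}) : (0 < T)%N ->
  A T \subset C -> (#|X| <= T)%N -> h (C :|: X) - h C <= h (A T) - h set0.
Proof.
move=> T0 ATC XT.
have per_step t : (t < T)%N ->
    h (C :|: X) - h C <= (h (A t.+1) - h (A t)) *+ T.
  move=> tT; rewrite lerBlDl; apply: le_trans (greedy_step_union_bound
    (A_step tT) (subset_trans (greedy_run_sub (ltnW tT)) ATC) X) _.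
  by rewrite lerD2l ler_wpMn2l ?greedy_gain_ge0.
have : (h (C :|: X) - h C) *+ T <= (h (A T) - h (A 0)) *+ T.
  have -> : (h (C :|: X) - h C) *+ T = \sum_(0 <= t < T) (h (C :|: X) - h C).
    by rewrite sumr_const_nat subn0.
  have telescope : \sum_(0 <= t < T) (h (A t.+1) - h (A t)) = h (A T) - h (A 0).
    exact: (telescope_sumr (fun t => h (A t)) (leq0n T)).
  rewrite -telescope -sumrMnl.
  by apply: ler_sum_nat => t /andP[_ tT]; apply: per_step.
by rewrite lerMn2r -A0 => /orP[/eqP T_eq0 | //]; rewrite T_eq0 in T0.
Qed.

Lemma greedy_gap_contraction (X : {set V}) t : (t < T)%N -> (#|X| <= T)%N ->
  h X - h (A t.+1) <= (1 - (T%:R : R)^-1) * (h X - h (A t)).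
Proof.
move=> tT XT; have Tpos : 0 < (T%:R : R) by rewrite ltr0n; lia.
have d_ge0 := greedy_gain_ge0 tT.
have gap_le : h X - h (A t) <= T%:R * (h (A t.+1) - h (A t)).
  have := greedy_step_union_bound (A_step tT) (subxx (A t)) X.
  have : (h (A t.+1) - h (A t)) *+ #|X| <= T%:R * (h (A t.+1) - h (A t)).
    by rewrite mulr_natl ler_wpMn2l.
  have : h X <= h (A t :|: X) by apply: h_mono; apply: subsetUr.
  lra.
rewrite -ler_pdivrMl // in gap_le.
rewrite mulrBl mul1r; lra.
Qed.

Lemma greedy_run_approx (X : {set V}) : (0 < T)%N -> (#|X| <= T)%N ->
  (1 - (expR 1)^-1) * (h X - h set0) <= h (A T) - h set0.
Proof.
move=> T0 XT; set q := 1 - (T%:R : R)^-1.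
have q0 : 0 <= q by rewrite subr_ge0 invf_le1 ?ler1n ?ltr0n.
have gap_pow t : (t <= T)%N -> h X - h (A t) <= q ^+ t * (h X - h set0).
  elim: t => [|t IH] tT; first by rewrite expr0 mul1r A0.
  apply: le_trans (greedy_gap_contraction tT XT) _.
  by rewrite exprS -mulrA ler_wpM2l // IH // ltnW.
have gap0 : 0 <= h X - h set0 by rewrite subr_ge0; apply: h_mono; apply: sub0set.
have := ler_wpM2r gap0 (contraction_pow_le R T0).
have := gap_pow T (leqnn T); lra.
Qed.

End GreedyRun.

Lemma greedy_output_augment (T : nat) (S X Y : {set V}) :
  (forall B, 0 <= h B) -> greedy_output h T S -> (0 < T)%N -> (#|Y| <= T)%N ->
  h (X :|: Y) <= h (X :|: S) + h S.
Proof.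
move=> h_ge0 [A [A0 A_step AS]] T0 YT.
have AT_sub : A T \subset X :|: S by rewrite AS subsetUr.
have := greedy_run_union_gain A0 A_step T0 AT_sub YT.
have : h (X :|: Y) <= h ((X :|: S) :|: Y).
  by apply: h_mono; apply: setSU; apply: subsetUl.
have := h_ge0 set0; rewrite AS; lra.
Qed.

Lemma greedy_output_approx (T : nat) (S X : {set V}) :
  greedy_output h T S -> (0 < T)%N -> (#|X| <= T)%N ->
  (1 - (expR 1)^-1) * (h X - h set0) <= h S - h set0.
Proof. by case=> A [A0 A_step <-]; apply: greedy_run_approx. Qed.

End MonotoneSubmodular.

Section Objectives.
Variables (R : realType) (V : finType).

Lemma monotone_union_shift (h : {set V} -> R) (C : {set V}) :
  monotone_fn h -> monotone_fn (fun X => h (X :|: C)).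
Proof. by move=> h_mono X Y XY; apply: h_mono; apply: setSU. Qed.

Lemma submodular_union_shift (h : {set V} -> R) (C : {set V}) :
  submodular_fn h -> submodular_fn (fun X => h (X :|: C)).
Proof.
move=> h_sub X Y /=.
have -> : (X :|: Y) :|: C = (X :|: C) :|: (Y :|: C).
  by rewrite setUACA setUid.
by rewrite setUIl; apply: h_sub.
Qed.

Lemma monotone_sum (I : finType) (F : I -> {set V} -> R) :
  (forall i, monotone_fn (F i)) -> monotone_fn (fun X => \sum_i F i X).
Proof. by move=> F_mono X Y XY; apply: ler_sum => i _; apply: F_mono. Qed.

Lemma submodular_sum (I : finType) (F : I -> {set V} -> R) :
  (forall i, submodular_fn (F i)) -> submodular_fn (fun X => \sum_i F i X).
Proof. by move=> F_sub X Y; rewrite -!big_split; apply: ler_sum => i _; apply: F_sub. Qed.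

Lemma OPT_le (m k l : nat) (f : 'I_m -> {set V} -> R)
    (b : {set V} -> 'I_m -> R) (U : R) :
  0 <= U -> (forall X i, 0 <= b X i) ->
  (forall (X Si : {set V}) i, (#|X| <= l)%N -> (#|Si| <= k - l)%N -> f i (X :|: Si) <= b X i) ->
  (forall X : {set V}, (#|X| <= l)%N -> \sum_i b X i <= U) ->
  OPT f k l <= U.
Proof.
move=> U0 b0 f_le b_le; apply: bigmax_le => // X XL.
apply: le_trans (b_le X XL); apply: ler_sum => i _.
by apply: bigmax_le => // Si SiL; apply: f_le.
Qed.

End Objectives.

Theorem proposition2 (R : realType) (V : finType) (m k l : nat)
  (f : 'I_m -> {set V} -> R)
  (hl : (1 <= l)%N) (hlk : (l < k)%N) (hkn : (k <= #|V|)%N)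
  (f_ge0 : forall i A, 0 <= f i A)
  (f_mono : forall i, monotone_fn (f i))
  (f_sub : forall i, submodular_fn (f i))
  (Str : {set V}) (S : 'I_m -> {set V})
  (phase1 : forall i, greedy_output (f i) (k - l) (S i))
  (phase2 : greedy_output (fun X => \sum_(i < m) f i (X :|: S i)) l Str) :
  let gamma := \sum_(i < m) f i (S i) in
  let val := \sum_(i < m) f i (Str :|: S i) in
  Num.max gamma ((1 - (expR 1)^-1) * (OPT f k l - 2 * gamma) + gamma) <= val
  /\ OPT f k l / 2 <= val.
Proof.
move=> gamma val; set c : R := 1 - (expR 1)^-1.
pose g X := \sum_(i < m) f i (X :|: S i).
have g_mono : monotone_fn g.
  by apply: monotone_sum => i; apply: monotone_union_shift.
have g_sub : submodular_fn g.
  by apply: submodular_sum => i; apply: submodular_union_shift.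
have g0 : g set0 = gamma by apply: eq_bigr => i _; rewrite set0U.
have gStr : g Str = val by [].
have c_pos : 0 < c by apply: lt_le_trans (half_le_one_minus_inv_e R); lra.
have gamma0 : 0 <= gamma by apply: sumr_ge0 => i _.
have gamma_le : gamma <= val by apply: ler_sum => i _; apply: f_mono; apply: subsetUr.
have phase1_len : (0 < k - l)%N by rewrite subn_gt0.
(* Phase 1 bounds each inner maximum at X, phase 2 bounds g X. *)
have OPT_bound : OPT f k l <= c^-1 * (val - gamma) + 2 * gamma.
  apply: (OPT_le (b := fun X i => f i (X :|: S i) + f i (S i))).
  - have c_inv0 : 0 <= c^-1 by rewrite invr_ge0 ltW.
    by apply: addr_ge0; apply: mulr_ge0; rewrite // subr_ge0.
  - by move=> X i; apply: addr_ge0.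
  - move=> X Si i _ SiL.
    exact: (greedy_output_augment (f_mono i) (f_sub i) X (f_ge0 i) (phase1 i)
      phase1_len SiL).
  move=> X XL; rewrite big_split /= -/(g X) -/gamma.
  have := greedy_output_approx g_mono g_sub phase2 hl XL.
  rewrite -/c g0 gStr -ler_pdivlMl //; lra.
have key : c * (OPT f k l - 2 * gamma) + gamma <= val.
  move: (ler_wpM2l (ltW c_pos) OPT_bound).
  by rewrite mulrDr mulrA mulfV ?gt_eqF // mul1r mulrBr; lra.
split; first by rewrite ge_max gamma_le key.
apply: le_trans (max_guarantee_ge_half gamma _ (half_le_one_minus_inv_e R)) _.
by rewrite ge_max gamma_le key.
Qed.
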